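(* Let $G_1$ and $G_2$ be simple graphs with $|V(G_1)|=n$. Let $\alpha'(G_1)$ be the size of a maximum matching $M$ of $G_1$ and $l=n-2\alpha'(G_1)$ the number of $M$-unsaturated vertices of $G_1$. Then $n\,s(G_2)\le s(G_1\circ G_2)\le n\,s(G_2)+\alpha'(G_1)+l.$
   Context: A matching in a graph is a set of edges no two of which share a vertex; it is maximal if it is not properly contained in another matching, and maximum if it has the largest possible size. A vertex is $M$-unsaturated if no edge of $M$ is incident to it. The saturation number $s(G)$ is the minimum cardinality of a maximal matching of $G$. The corona $G_1\circ G_2$ is obtained by taking one copy of $G_1$ and $|V(G_1)|$ disjoint copies of $G_2$, and joining the $i$-th vertex of $G_1$ by an edge to every vertex of the $i$-th copy of $G_2$. *)

From mathcomp Require Import all_boot.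
Set Implicit Arguments. Unset Strict Implicit. Unset Printing Implicit Defensive.

Section Graphs.
Variable V : finType.

Definition simple_graph (e : rel V) : Prop := symmetric e /\ irreflexive e.

Definition is_edge (e : rel V) (A : {set V}) : bool :=
  [exists x, exists y, e x y && (A == [set x; y])].

Definition matching (e : rel V) (M : {set {set V}}) : bool :=
  [forall A in M, is_edge e A] &&
  [forall A in M, forall B in M, (A != B) ==> [disjoint A & B]].

Definition maximal_matching (e : rel V) (M : {set {set V}}) : bool :=
  matching e M && [forall M' : {set {set V}}, (M \proper M') ==> ~~ matching e M'].

Definition matching_number (e : rel V) : nat :=
  \max_(M : {set {set V}} | matching e M) #|M|.

(* saturation number s(G): minimum size of a maximal matching.
   (A maximal matching always exists and has size <= #|V|, so the default
   value #|V| of the iterated minimum is never the answer unless attained.) *)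
Definition saturation_number (e : rel V) : nat :=
  \big[minn/#|V|]_(M : {set {set V}} | maximal_matching e M) #|M|.

End Graphs.

(* corona G1 o G2: vertices are V1 (the copy of G1) plus, for each vertex a of
   G1, a copy {a} x V2 of G2; a is joined to every vertex of its copy. *)
Definition corona (V1 V2 : finType) (e1 : rel V1) (e2 : rel V2)
  : rel (V1 + (V1 * V2))%type :=
  fun u v =>
    match u, v with
    | inl a, inl b => e1 a b
    | inr (a, x), inr (b, y) => (a == b) && e2 x y
    | inl a, inr (b, _) => a == b
    | inr (a, _), inl b => a == b
    end.

(* Both bounds rest on one extension principle: if every edge left uncovered by
   a matching [K] meets a vertex set [S], then greedily adding uncovered edges
   uses up a vertex of [S] each time and ends in a maximal matching, so
   [s(G) <= |K| + |S|].
   Upper bound: a maximum matching of [G1] together with a minimum maximal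
   matching in every copy of [G2] leaves uncovered only edges at the [l] free
   vertices of [G1].
   Lower bound: given a maximal matching [M] of the corona, its trace on the
   [a]-th copy of [G2] leaves uncovered only edges at vertices [x] for which the
   pendant edge [a (a,x)] lies in [M]; hence at least [s(G2)] edges of [M] meet
   that copy, and no edge meets two copies. *)

From mathcomp Require Import all_boot.
Set Implicit Arguments. Unset Strict Implicit. Unset Printing Implicit Defensive.

Lemma leq_bigmin_seq (I : eqType) (s : seq I) (P : pred I) (F : I -> nat) d j :
  j \in s -> P j -> \big[minn/d]_(i <- s | P i) F i <= F j.
Proof.
elim: s => // i s IHs; rewrite inE big_cons => /predU1P [<- -> |js Pj].
  exact: geq_minl.
case: (P i); last exact: IHs.
exact: leq_trans (geq_minr _ _) (IHs js Pj).
Qed.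

Lemma card_bigcup_le (I T : finType) (F : I -> {set T}) :
  #|\bigcup_i F i| <= \sum_i #|F i|.
Proof.
elim/big_rec2: _ => [|i n U _ leUn]; first by rewrite cards0.
by rewrite (leq_trans (leq_card_setU _ _).1) ?leq_add2l.
Qed.

Lemma sum_card_classes_le (I T : finType) (M : {set T}) (P : I -> pred T) :
  (forall A i j, A \in M -> P i A -> P j A -> i = j) ->
  \sum_i #|[set A in M | P i A]| <= #|M|.
Proof.
move=> uniqP; rewrite -sum1_card.
under eq_bigr => i _ do rewrite -sum1_card big_mkcond /=.
rewrite exchange_big /= [leqRHS]big_mkcond /=; apply: leq_sum => A _.
case: (boolP (A \in M)) => AM; last by rewrite big1 // => i _; rewrite inE (negbTE AM).
under eq_bigr => i _ do rewrite inE AM /=.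
rewrite -big_mkcond sum1_card /=.
by apply/card_le1_eqP => i j Pi Pj; apply: (uniqP A).
Qed.

Lemma cover_setU (T : finType) (P Q : {set {set T}}) : cover (P :|: Q) = cover P :|: cover Q.
Proof. by rewrite /cover bigcup_setU. Qed.

Section Matchings.
Variables (V : finType) (e : rel V).
Implicit Types (M N K : {set {set V}}) (A B S : {set V}).

Lemma is_edgeP A : reflect (exists x y, e x y /\ A = [set x; y]) (is_edge e A).
Proof.
apply: (iffP existsP) => [[x /existsP [y /andP [exy /eqP ->]]]|[x [y [exy ->]]]].
  by exists x, y.
by exists x; apply/existsP; exists y; rewrite exy eqxx.
Qed.

Lemma matchingP M : reflect
  ((forall A, A \in M -> is_edge e A) /\
   (forall A B v, A \in M -> B \in M -> v \in A -> v \in B -> A = B))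
  (matching e M).
Proof.
apply: (iffP andP) => [[/forall_inP edgeM /forall_inP disjM]|[edgeM disjM]]; split.
- exact: edgeM.
- move=> A B v AM BM vA vB; apply/eqP/negPn/negP => neqAB.
  have := implyP (forall_inP (disjM A AM) B BM) neqAB.
  by move/disjointFr/(_ vA); rewrite vB.
- exact/forall_inP.
- apply/forall_inP => A AM; apply/forall_inP => B BM; apply/implyP => neqAB.
  apply/pred0P => v /=; apply/negbTE/andP => -[vA vB].
  by move/eqP: neqAB; apply; apply: disjM vA vB.
Qed.

Lemma matching0 : matching e set0.
Proof. by apply/matchingP; split=> A //; rewrite inE. Qed.

Lemma matching1 A : is_edge e A -> matching e [set A].
Proof.
by move=> edgeA; apply/matchingP; split=> [A'|A' B v]; rewrite !inE => /eqP-> // /eqP->.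
Qed.

Lemma matching_setU M N : matching e M -> matching e N ->
  [disjoint cover M & cover N] -> matching e (M :|: N).
Proof.
move=> /matchingP [edgeM disjM] /matchingP [edgeN disjN] disjMN.
have cover_excl B B' v : B \in M -> B' \in N -> v \in B -> v \in B' -> False.
  move=> BM B'N vB vB'.
  have vM : v \in cover M by apply/bigcupP; exists B.
  have vN : v \in cover N by apply/bigcupP; exists B'.
  by rewrite (disjointFr disjMN vM) in vN.
apply/matchingP; split=> [A|A B v]; first by rewrite inE => /orP [/edgeM|/edgeN].
rewrite !inE => /orP [AM|AN] /orP [BM|BN] vA vB.
- exact: disjM vA vB.
- by case: (cover_excl A B v).
- by case: (cover_excl B A v).
- exact: disjN vA vB.
Qed.

Lemma matching_bigcup (I : finType) (F : I -> {set {set V}}) :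
  (forall i, matching e (F i)) ->
  (forall i j v, v \in cover (F i) -> v \in cover (F j) -> i = j) ->
  matching e (\bigcup_i F i).
Proof.
move=> matchF partF; apply/matchingP; split.
  by move=> A /bigcupP [i _]; have /matchingP [edgeF _] := matchF i; apply: edgeF.
move=> A B v /bigcupP [i _ AF] /bigcupP [j _ BF] vA vB.
have eqij : i = j by apply: (partF _ _ v); apply/bigcupP; [exists A | exists B].
by subst j; have /matchingP [_ disjF] := matchF i; apply: disjF vA vB.
Qed.

Lemma matching_setU1 M x y : matching e M -> e x y ->
  x \notin cover M -> y \notin cover M -> matching e ([set x; y] |: M).
Proof.
move=> matchM exy nx ny; apply: matching_setU => //.
  by apply: matching1; apply/is_edgeP; exists x, y.
rewrite cover1 disjoint_subset; apply/subsetP => v.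
by rewrite !inE => /orP [] /eqP ->.
Qed.

Lemma maximal_matchingP M : reflect
  (matching e M /\ forall x y, e x y -> (x \in cover M) || (y \in cover M))
  (maximal_matching e M).
Proof.
apply: (iffP andP) => [[matchM /forallP maxM]|[matchM coverM]]; split=> //.
  move=> x y exy; apply/negPn/negP; rewrite negb_or => /andP [nx ny].
  have xyM : [set x; y] \notin M.
    by apply: contra nx => xyM; apply/bigcupP; exists [set x; y]; rewrite // !inE eqxx.
  have ltM : M \proper [set x; y] |: M by apply: properUr; rewrite sub1set.
  by have := implyP (maxM _) ltM; rewrite matching_setU1.
apply/forallP => M'; apply/implyP => /properP [subMM' [A AM' AnM]].
apply/negP => /matchingP [edgeM' disjM'].
have [v vA /bigcupP [B BM vB]] : exists2 v, v \in A & v \in cover M.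
  case/is_edgeP: (edgeM' A AM') => x [y [exy ->]].
  by case/orP: (coverM x y exy) => ?; [exists x | exists y]; rewrite // !inE eqxx ?orbT.
by rewrite (disjM' A B v AM' (subsetP subMM' B BM) vA vB) BM in AnM.
Qed.

Lemma maximal_extension K S : matching e K ->
  (forall x y, e x y -> x \notin cover K -> y \notin cover K -> (x \in S) || (y \in S)) ->
  exists2 N, maximal_matching e N & #|N| <= #|K| + #|S|.
Proof.
elim: {S}_.+1 {-2}S (ltnSn #|S|) K => // n IHn S ltSn K matchK coverK.
have [/existsP [x /existsP [y /and3P [exy nx ny]]] | noEdge] :=
  boolP [exists x, exists y, [&& e x y, x \notin cover K & y \notin cover K]]; last first.
  exists K; last exact: leq_addr.
  apply/maximal_matchingP; split=> // x y exy; apply/negPn/negP; rewrite negb_or => nxy.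
  by move/negP: noEdge; apply; apply/existsP; exists x; apply/existsP; exists y; rewrite exy.
pose K' := [set x; y] |: K; pose S' := S :\: [set x; y].
have xyK' : (x \in cover K') && (y \in cover K').
  by apply/andP; split; apply/bigcupP; exists [set x; y]; rewrite ?setU11 // !inE eqxx ?orbT.
have coverK' : forall u v, e u v -> u \notin cover K' -> v \notin cover K' ->
    (u \in S') || (v \in S').
  move=> u v euv nu nv; have subK : cover K \subset cover K'.
    by apply/bigcupsP => A AK; apply: bigcup_sup; rewrite setU1r.
  have nuK : u \notin cover K by apply: contra nu; apply: (subsetP subK).
  have nvK : v \notin cover K by apply: contra nv; apply: (subsetP subK).
  have notxy w : w \notin cover K' -> w \notin [set x; y].
    by apply: contra; rewrite !inE => /orP [] /eqP ->; case/andP: xyK'.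
  by rewrite !in_setD (negbTE (notxy u nu)) (negbTE (notxy v nv)) /= coverK.
have ltS' : #|S'| < #|S|.
  apply/proper_card/properP; split; first exact: subsetDl.
  by case/orP: (coverK x y exy nx ny) => ?; [exists x | exists y]; rewrite // !inE eqxx ?orbT.
have [N maxN leN] := IHn S' (leq_trans ltS' ltSn) K' (matching_setU1 matchK exy nx ny) coverK'.
exists N => //; apply: (leq_trans leN).
have xyK : [set x; y] \notin K.
  by apply: contra nx => xyK; apply/bigcupP; exists [set x; y]; rewrite // !inE eqxx.
by rewrite cardsU1 xyK addnAC addnC leq_add2l.
Qed.

Lemma matching_number_attained : exists2 M, matching e M & #|M| = matching_number e.
Proof.
have nonempty : 0 < #|[pred M | matching e M]|.
  by apply/card_gt0P; exists set0; rewrite inE matching0.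
have [M matchM maxM] := eq_bigmax_cond (fun M => #|M|) nonempty.
by exists M; rewrite // /matching_number maxM.
Qed.

Lemma saturation_number_min M : maximal_matching e M -> saturation_number e <= #|M|.
Proof. by move=> maxM; apply: leq_bigmin_seq; rewrite ?mem_index_enum. Qed.

(* The default value [#|V|] of the iterated minimum is attained: the empty
   matching extends to a maximal one with at most [#|V|] edges. *)
Lemma saturation_number_attained :
  exists2 M, maximal_matching e M & #|M| = saturation_number e.
Proof.
have [N maxN leN] : exists2 N, maximal_matching e N & #|N| <= #|V|.
  rewrite -(add0n #|V|) -(cards0 {set V}) -cardsT.
  by apply: maximal_extension matching0 _ => x y; rewrite in_setT.
have [//|satV] : (exists2 M, maximal_matching e M & #|M| = saturation_number e)
                 \/ saturation_number e = #|V|.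
  rewrite /saturation_number; elim/big_ind: _ => [|m1 m2 IH1 IH2|M maxM].
  - by right.
  - by case: leqP => _; rewrite /minn; [case: IH2 | case: IH1].
  - by left; exists M.
by exists N => //; apply/eqP; rewrite eqn_leq saturation_number_min // satV leN.
Qed.

Lemma saturation_number_le K S : matching e K ->
  (forall x y, e x y -> x \notin cover K -> y \notin cover K -> (x \in S) || (y \in S)) ->
  saturation_number e <= #|K| + #|S|.
Proof.
move=> matchK coverK; have [N maxN] := maximal_extension matchK coverK.
exact/leq_trans/saturation_number_min.
Qed.

Lemma card_cover_matching M : irreflexive e -> matching e M -> #|cover M| = 2 * #|M|.
Proof.
move=> irr_e /matchingP [edgeM disjM].
have trivM : trivIset M.
  apply/trivIsetP => A B AM BM neqAB; rewrite -setI_eq0; apply/eqP/setP => v.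
  by rewrite !inE; apply/negbTE/andP => -[vA vB]; move/eqP: neqAB; apply; apply: disjM vA vB.
rewrite -(eqP trivM) (eq_bigr (fun _ => 2)) ?sum_nat_const 1?mulnC // => A /edgeM /is_edgeP.
case=> x [y [exy ->]]; rewrite cards2; suff -> : x != y by [].
by apply: contraTneq exy => ->; rewrite irr_e.
Qed.

End Matchings.

Section MatchingImage.
Variables (V V' : finType) (e : rel V) (e' : rel V') (f : V -> V').
Hypotheses (inj_f : injective f) (mono_f : {mono f : x y / e x y >-> e' x y}).

Lemma cover_imsets (M : {set {set V}}) : cover [set f @: A | A : {set V} in M] = f @: cover M.
Proof. by rewrite cover_imset imset_cover. Qed.

Lemma matching_imset M : matching e M -> matching e' [set f @: A | A : {set V} in M].
Proof.
move=> /matchingP [edgeM disjM]; apply/matchingP; split.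
  move=> _ /imsetP [A AM ->]; case/is_edgeP: (edgeM A AM) => x [y [exy ->]].
  by apply/is_edgeP; exists (f x), (f y); rewrite mono_f imsetU1 imset_set1.
move=> _ _ _ /imsetP [A AM ->] /imsetP [B BM ->] /imsetP [x xA ->].
by rewrite mem_imset // => xB; rewrite (disjM A B x).
Qed.

Lemma matching_preimset M : matching e' M -> matching e [set B : {set V} | f @: B \in M].
Proof.
move=> /matchingP [edgeM disjM]; apply/matchingP; split=> [B|B B' x]; rewrite !inE.
  move=> BM; case/is_edgeP: (edgeM _ BM) => u [v [euv defB]].
  have /imsetP [x xB defu] : u \in f @: B by rewrite defB !inE eqxx.
  have /imsetP [y yB defv] : v \in f @: B by rewrite defB !inE eqxx orbT.
  apply/is_edgeP; exists x, y; split; first by rewrite -mono_f -defu -defv.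
  by apply: (imset_inj inj_f); rewrite defB imsetU1 imset_set1 defu defv.
move=> BM B'M xB xB'; apply: (imset_inj inj_f).
by apply: (disjM _ _ (f x)); rewrite ?mem_imset.
Qed.

End MatchingImage.

Section Corona.
Variables (V1 V2 : finType) (e1 : rel V1) (e2 : rel V2).
Local Notation W := (V1 + V1 * V2)%type.
Local Notation G := (corona e1 e2).

Definition corona_copy (a : V1) (x : V2) : W := inr (a, x).
Local Notation copy := corona_copy.

Definition corona_base (u : V1) : W := inl u.
Local Notation base := corona_base.

Lemma corona_base_inj : injective base.
Proof. by move=> u v []. Qed.

Lemma corona_base_mono : {mono base : u v / e1 u v >-> G u v}.
Proof. by []. Qed.

Lemma corona_copy_inj a : injective (copy a).
Proof. by move=> x y []. Qed.

Lemma corona_copy_mono a : {mono copy a : x y / e2 x y >-> G x y}.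
Proof. by move=> x y; rewrite /= eqxx. Qed.

Lemma corona_edge_copy A a x : is_edge G A -> copy a x \in A ->
  A = [set base a; copy a x] \/ exists y, A = copy a @: [set x; y].
Proof.
case/is_edgeP => u [v [euv ->]]; rewrite /corona_copy /corona_base !inE.
case/orP => /eqP endpoint; [subst u | subst v]; move: euv.
  case: v => [b|[b y]] /= => [/eqP <-|/andP [/eqP <- _]]; first by left; rewrite setUC.
  by right; exists y; rewrite imsetU1 imset_set1.
case: u => [b|[b y]] /= => [/eqP ->|/andP [/eqP -> _]]; first by left.
by right; exists y; rewrite imsetU1 imset_set1 setUC.
Qed.

Lemma corona_edge_copy_uniq A a b x y : is_edge G A ->
  copy a x \in A -> copy b y \in A -> a = b.
Proof.
move=> edgeA /(corona_edge_copy edgeA) [->|[z ->]].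
  by rewrite !inE => /orP [/eqP //|/eqP [->]].
by case/imsetP => ? _ [].
Qed.

Definition corona_lift (M1 : {set {set V1}}) (M2 : {set {set V2}}) : {set {set W}} :=
  [set base @: A | A : {set V1} in M1] :|: \bigcup_a [set copy a @: B | B : {set V2} in M2].

Section Lift.
Variables (M1 : {set {set V1}}) (M2 : {set {set V2}}).

Lemma base_notin_cover_copies u :
  base u \notin cover (\bigcup_a [set copy a @: B | B : {set V2} in M2]).
Proof. by apply/bigcupP => -[_ /bigcupP [a _ /imsetP [B _ ->]] /imsetP [x _]]. Qed.

Lemma mem_base_cover_lift u : (base u \in cover (corona_lift M1 M2)) = (u \in cover M1).
Proof.
rewrite cover_setU in_setU (negbTE (base_notin_cover_copies u)) orbF cover_imsets.
by rewrite (mem_imset _ _ corona_base_inj).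
Qed.

Lemma copy_cover_lift a x : x \in cover M2 -> copy a x \in cover (corona_lift M1 M2).
Proof.
case/bigcupP => B BM2 xB; rewrite cover_setU in_setU; apply/orP; right.
apply/bigcupP; exists (copy a @: B); last by rewrite mem_imset //; apply: corona_copy_inj.
by apply/bigcupP; exists a => //; apply: imset_f.
Qed.

Lemma matching_corona_lift : matching e1 M1 -> matching e2 M2 ->
  matching G (corona_lift M1 M2).
Proof.
move=> match1 match2; apply: matching_setU.
- exact (matching_imset corona_base_inj corona_base_mono match1).
- apply: matching_bigcup => [a|a b v].
    exact (matching_imset (@corona_copy_inj a) (@corona_copy_mono a) match2).
  by rewrite !cover_imsets => /imsetP [x _ ->] /imsetP [y _] [].
- rewrite disjoint_subset; apply/subsetP => w.
  by rewrite cover_imsets => /imsetP [u _ ->]; rewrite inE base_notin_cover_copies.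
Qed.

Lemma corona_lift_uncovered :
  (forall x y, e2 x y -> (x \in cover M2) || (y \in cover M2)) ->
  forall v w, G v w -> v \notin cover (corona_lift M1 M2) ->
  w \notin cover (corona_lift M1 M2) ->
  (v \in base @: ~: cover M1) || (w \in base @: ~: cover M1).
Proof.
have free_base u : base u \notin cover (corona_lift M1 M2) -> base u \in base @: ~: cover M1.
  by rewrite mem_base_cover_lift (mem_imset _ _ corona_base_inj) inE.
move=> cover2 [u|[a x]] [u'|[b y]] /=.
- by move=> _ /free_base ->.
- by move=> _ /free_base ->.
- by move=> _ _ /free_base ->; rewrite orbT.
case/andP => /eqP <- /cover2 /orP [] /(copy_cover_lift a) covered /negP nx /negP ny.
- by case: nx.
- by case: ny.
Qed.

Lemma card_corona_lift : #|corona_lift M1 M2| <= #|M1| + #|V1| * #|M2|.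
Proof.
apply: leq_trans (leq_card_setU _ _).1 _; apply: leq_add.
  by rewrite card_imset //; apply: imset_inj corona_base_inj.
apply: leq_trans (card_bigcup_le _) (eq_leq _); rewrite -sum_nat_const.
by apply: eq_bigr => a _; rewrite card_imset //; apply/imset_inj/corona_copy_inj.
Qed.

End Lift.

Lemma saturation_number_corona_le : irreflexive e1 ->
  saturation_number G <= #|V1| * saturation_number e2 + matching_number e1
                         + (#|V1| - 2 * matching_number e1).
Proof.
move=> irr_e1.
have [M1 match1 <-] := matching_number_attained e1.
have [M2 /maximal_matchingP [match2 cover2] <-] := saturation_number_attained e2.
apply: leq_trans (saturation_number_le (matching_corona_lift match1 match2)
                                       (corona_lift_uncovered cover2)) _.
rewrite card_imset; last exact: corona_base_inj.
rewrite [#|~: _|]cardsCs setCK (card_cover_matching irr_e1 match1) leq_add2r addnC.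
exact: card_corona_lift.
Qed.

Definition corona_trace (M : {set {set W}}) a := [set B : {set V2} | copy a @: B \in M].

Definition corona_pendants (M : {set {set W}}) a := [set x | [set base a; copy a x] \in M].

Section Trace.
Variables (M : {set {set W}}) (a : V1).

Lemma corona_pendant_inj : injective (fun x => [set base a; copy a x]).
Proof. by move=> x y /setP /(_ (copy a x)); rewrite !inE eqxx orbT => /esym /eqP []. Qed.

Lemma corona_trace_uncovered x y : maximal_matching G M -> e2 x y ->
  x \notin cover (corona_trace M a) -> y \notin cover (corona_trace M a) ->
  (x \in corona_pendants M a) || (y \in corona_pendants M a).
Proof.
case/maximal_matchingP => /matchingP [edgeM _] coverM exy.
have pendant z : z \notin cover (corona_trace M a) -> copy a z \in cover M ->
    z \in corona_pendants M a.
  move=> nz /bigcupP [A AM zA].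
  case: (corona_edge_copy (edgeM A AM) zA) => [defA|[w defA]]; first by rewrite inE -defA.
  case/negP: nz; apply/bigcupP; exists [set z; w]; last by rewrite !inE eqxx.
  by rewrite inE -defA.
move=> nx ny; have := coverM (copy a x) (copy a y).
rewrite corona_copy_mono exy => /(_ isT) /orP [/(pendant x nx) -> // | /(pendant y ny) ->].
exact: orbT.
Qed.

Lemma card_corona_trace_pendants : matching G M ->
  #|corona_trace M a| + #|corona_pendants M a| <=
  #|[set A in M | [exists x, copy a x \in A]]|.
Proof.
move=> matchM.
have /matchingP [edgeN _] := matching_preimset (@corona_copy_inj a) (@corona_copy_mono a) matchM.
pose inner := [set copy a @: B | B : {set V2} in corona_trace M a].
pose pendants := [set [set base a; copy a x] | x in corona_pendants M a].
have disj : inner :&: pendants = set0.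
  apply/setP => A; rewrite !inE; apply/andP => -[/imsetP [B _ ->] /imsetP [x _]].
  by move=> /setP /(_ (base a)); rewrite !inE eqxx => /imsetP [].
rewrite -(card_imset _ (imset_inj (@corona_copy_inj a))) -(card_imset _ corona_pendant_inj).
rewrite -cardsUI disj cards0 addn0; apply/subset_leq_card; rewrite subUset.
apply/andP; split; apply/subsetP => A /imsetP [].
  move=> B BN ->; case/is_edgeP: (edgeN B BN) => x [y [_ defB]]; rewrite inE in BN.
  rewrite inE BN; apply/existsP; exists x.
  by rewrite mem_imset ?defB ?inE ?eqxx //; apply: corona_copy_inj.
move=> x xS ->; rewrite inE in xS.
by rewrite inE xS; apply/existsP; exists x; rewrite !inE eqxx orbT.
Qed.

Lemma saturation_number_le_copy : maximal_matching G M ->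
  saturation_number e2 <= #|[set A in M | [exists x, copy a x \in A]]|.
Proof.
move=> maxM; have /andP [matchM _] := maxM.
apply: leq_trans (card_corona_trace_pendants matchM).
apply: saturation_number_le.
  exact (matching_preimset (@corona_copy_inj a) (@corona_copy_mono a) matchM).
by move=> x y exy; apply: corona_trace_uncovered.
Qed.

End Trace.

Lemma card_maximal_corona_ge M : maximal_matching G M ->
  #|V1| * saturation_number e2 <= #|M|.
Proof.
move=> maxM; have /andP [/matchingP [edgeM _] _] := maxM.
have le_sum : #|V1| * saturation_number e2 <=
    \sum_a #|[set A in M | [exists x, copy a x \in A]]|.
  by rewrite -sum_nat_const; apply: leq_sum => a _; apply: saturation_number_le_copy.
apply: leq_trans le_sum _.
apply: sum_card_classes_le => A a b AM /existsP [x xA] /existsP [y yA].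
exact: corona_edge_copy_uniq (edgeM A AM) xA yA.
Qed.

End Corona.

Theorem corollary2p9 (V1 V2 : finType) (e1 : rel V1) (e2 : rel V2) :
  simple_graph e1 -> simple_graph e2 ->
  let n := #|V1| in
  let a := matching_number e1 in
  let l := n - 2 * a in
  n * saturation_number e2 <= saturation_number (corona e1 e2) /\
  saturation_number (corona e1 e2) <= n * saturation_number e2 + a + l.
Proof.
move=> [_ irr_e1] _ n a l; split.
  have [M maxM <-] := saturation_number_attained (corona e1 e2).
  exact: card_maximal_corona_ge maxM.
exact: saturation_number_corona_le irr_e1.
Qed.
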